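(* The limit $\displaystyle\lim_{n\to\infty}\Big(\operatorname{li}(n)-\sum_{k=1}^n\frac{1}{H_k-\gamma}\Big)$ (over positive integers $n$) exists, where $\operatorname{li}(x)=\int_0^x\frac{dt}{\log t}$ (Cauchy principal value), $H_k=\sum_{j=1}^k\frac1j$, and $\gamma$ is the Euler–Mascheroni constant. *)

From Stdlib Require Import Reals.
From Coquelicot Require Import Coquelicot.
Open Scope R_scope.

Fixpoint harmonic (k : nat) : R :=
  match k with
  | O => 0
  | S k' => harmonic k' + / INR (S k')
  end.

Definition euler_gamma : R := real (Lim_seq (fun n => harmonic n - ln (INR n))).

(* Logarithmic integral li(x) = p.v. int_0^x dt / log t, i.e. the limit as
   eps -> 0+ of  int_0^{1-eps} dt/log t + int_{1+eps}^x dt/log t  (x > 1). *)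
Definition li (x : R) : R :=
  real (Lim (fun eps => RInt (fun t => / ln t) 0 (1 - Rabs eps)
                        + RInt (fun t => / ln t) (1 + Rabs eps) x) 0).

From Stdlib Require Import Reals Lra Lia.
From Coquelicot Require Import Coquelicot.
Open Scope R_scope.

(* Near t = 1 one has 1/(t-1) <= 1/ln t <= 1/(t-1) + 1, so in the principal
   value defining li the two sides of the singularity cancel up to an
   integrand in [0, 2]: the truncations at 1 -+ eps increase as eps decreases,
   by at most 2 d(eps), so they converge and li x = c + int_2^x dt/ln t.
   The bounds H_k - ln(k+1) <= gamma <= H_k - ln k put 1/(H_k - gamma) between
   1/ln(k+1) and 1/ln k, as is int_k^(k+1) dt/ln t.  Hence
   li(n) - sum_(k<=n) 1/(H_k - gamma) increases for n >= 2, with increments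
   dominated by the telescoping 1/ln n - 1/ln(n+2). *)

Lemma ln_bounds y : 0 < y -> 1 - / y <= ln y <= y - 1.
Proof.
  intros Hy.
  assert (Hup : forall z, 0 < z -> ln z <= z - 1).
  { intros z Hz. rewrite <- (ln_exp (z - 1)). apply ln_le; [exact Hz|].
    generalize (exp_ineq1_le (z - 1)); lra. }
  split; [|exact (Hup y Hy)].
  generalize (Hup (/ y) (Rinv_0_lt_compat y Hy)). rewrite ln_Rinv by exact Hy. lra.
Qed.

Lemma ln_succ_bounds x : 0 < x -> / (x + 1) <= ln (x + 1) - ln x <= / x.
Proof.
  intros Hx. rewrite <- ln_div by lra.
  destruct (ln_bounds ((x + 1) / x)) as [Hlo Hhi].
  { apply Rdiv_lt_0_compat; lra. }
  replace (1 - / ((x + 1) / x)) with (/ (x + 1)) in Hlo by (field; lra).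
  replace ((x + 1) / x - 1) with (/ x) in Hhi by (field; lra).
  lra.
Qed.

Lemma ln_gt_0 t : 1 < t -> 0 < ln t.
Proof. intros Ht. rewrite <- ln_1. apply ln_increasing; lra. Qed.

Lemma inv_ln_bounds y : 0 < y -> y <> 1 -> / (y - 1) <= / ln y <= / (y - 1) + 1.
Proof.
  intros Hy Hy1. destruct (ln_bounds y Hy) as [Hlo Hhi].
  replace (/ (y - 1) + 1) with (/ (1 - / y)) by (field; lra).
  destruct (Rlt_or_le 1 y) as [Hgt|Hle].
  - assert (0 < 1 - / y).
    { enough (/ y < 1) by lra. rewrite <- Rinv_1. apply Rinv_lt_contravar; lra. }
    split; apply Rinv_le_contravar; lra.
  - assert (1 - / y < 0).
    { enough (1 < / y) by lra. rewrite <- Rinv_1. apply Rinv_lt_contravar; lra. }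
    assert (Hneg : forall a b, a <= b -> b < 0 -> / b <= / a).
    { intros a b Hab Hb.
      replace (/ b) with (- / - b) by (field; lra).
      replace (/ a) with (- / - a) by (field; lra).
      apply Ropp_le_contravar, Rinv_le_contravar; lra. }
    split; apply Hneg; lra.
Qed.

Lemma ex_finite_lim_seq_incr_telescoping (x w : nat -> R) :
  (forall n, 0 <= w n) -> (forall n, 0 <= x (S n) - x n <= w n - w (S n)) ->
  ex_finite_lim_seq x.
Proof.
  intros Hw Hstep.
  apply ex_finite_lim_seq_incr with (x O + w O).
  - intros n. generalize (Hstep n). lra.
  - intros n. enough (x n + w n <= x O + w O) by (generalize (Hw n); lra).
    apply (decreasing_prop (fun n => x n + w n)); [|lia].
    intros m. generalize (Hstep m). simpl. lra.
Qed.

Lemma is_lim_seq_nested (a b : nat -> R) :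
  (forall n, a (S n) <= a n) -> (forall n, b n <= b (S n)) -> (forall n, b n <= a n) ->
  exists l : R, is_lim_seq a l /\ forall n, b n <= l <= a n.
Proof.
  intros Ha Hb Hba.
  assert (Hb0 : forall n, b O <= b n) by (intros n; apply tech9; [exact Hb | lia]).
  assert (Ha0 : forall n, a n <= a O) by (intros n; apply decreasing_prop; [exact Ha | lia]).
  destruct (ex_finite_lim_seq_decr a (b O) Ha) as [la Hla].
  { intros n. generalize (Hb0 n) (Hba n). lra. }
  destruct (ex_finite_lim_seq_incr b (a O) Hb) as [lb Hlb].
  { intros n. generalize (Ha0 n) (Hba n). lra. }
  assert (Hle : lb <= la) by exact (is_lim_seq_le b a lb la Hba Hlb Hla).
  exists la. split; [exact Hla|]. intros n. split.
  - generalize (is_lim_seq_incr_compare b lb Hlb Hb n). lra.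
  - exact (is_lim_seq_decr_compare a la Hla Ha n).
Qed.

Lemma euler_gamma_bounds k : (1 <= k)%nat ->
  harmonic k - ln (INR k + 1) <= euler_gamma <= harmonic k - ln (INR k).
Proof.
  intros Hk. destruct k as [|n]; [lia|].
  set (a n := harmonic (S n) - ln (INR (S n))).
  set (b n := harmonic (S n) - ln (INR (S n) + 1)).
  assert (Hharm : forall n, harmonic (S (S n)) = harmonic (S n) + / (INR (S n) + 1))
    by (intros m; rewrite <- (S_INR (S m)); reflexivity).
  assert (Hpos : forall m, 0 < INR (S m)) by (intros m; apply lt_0_INR; lia).
  destruct (is_lim_seq_nested a b) as [l [Hla Hl]].
  - intros m. unfold a. rewrite Hharm, (S_INR (S m)).
    generalize (ln_succ_bounds (INR (S m)) (Hpos m)). lra.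
  - intros m. unfold b. rewrite Hharm, (S_INR (S m)).
    generalize (ln_succ_bounds (INR (S m) + 1) ltac:(generalize (Hpos m); lra)). lra.
  - intros m. unfold a, b.
    generalize (ln_le (INR (S m)) (INR (S m) + 1) (Hpos m) ltac:(lra)). lra.
  - replace euler_gamma with l; [exact (Hl n)|].
    unfold euler_gamma. rewrite (is_lim_seq_unique _ l); [reflexivity|].
    apply is_lim_seq_incr_1. exact Hla.
Qed.

Definition inv_ln (t : R) : R := / ln t.

Lemma inv_ln_gt_0 t : 1 < t -> 0 < inv_ln t.
Proof. intros Ht. apply Rinv_0_lt_compat, ln_gt_0, Ht. Qed.

Lemma inv_ln_le s t : 1 < s <= t -> inv_ln t <= inv_ln s.
Proof. intros Hst. apply Rinv_le_contravar; [apply ln_gt_0 | apply ln_le]; lra. Qed.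

Lemma inv_harmonic_sub_euler_gamma_bounds k : (2 <= k)%nat ->
  inv_ln (INR k + 1) <= / (harmonic k - euler_gamma) <= inv_ln (INR k).
Proof.
  intros Hk. destruct (euler_gamma_bounds k ltac:(lia)) as [Hlo Hhi].
  assert (Hln : 0 < ln (INR k)) by (apply ln_gt_0, (lt_INR 1); lia).
  unfold inv_ln. split; apply Rinv_le_contravar; lra.
Qed.

(* Stdlib's [ln] is [0] on nonpositive reals, so [inv_ln] vanishes there and
   is continuous at [0] since [1 / ln t -> 0] as [t -> 0+]. *)
Lemma inv_ln_continuous z : 0 <= z -> z <> 1 -> continuous inv_ln z.
Proof.
  intros Hz Hz1. destruct (Req_dec z 0) as [->|Hz0].
  - assert (Hln0 : forall y, y <= 0 -> ln y = 0).
    { intros y Hy. unfold ln. destruct (Rlt_dec 0 y); [exfalso; lra | reflexivity]. }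
    apply continuity_pt_filterlim. intros eps Heps.
    exists (exp (- / eps)). split; [exact (exp_pos _)|].
    intros y [_ Hy]. unfold inv_ln. rewrite (Hln0 0) by lra.
    change (Rabs (y - 0) < exp (- / eps)) in Hy. change (Rabs (/ ln y - / 0) < eps).
    rewrite Rinv_0, !Rminus_0_r in *.
    destruct (Rle_or_lt y 0) as [Hyneg|Hypos].
    + rewrite Hln0, Rinv_0, Rabs_R0; lra.
    + rewrite Rabs_pos_eq in Hy by lra.
      assert (Hlny : ln y < - / eps).
      { rewrite <- (ln_exp (- / eps)). apply ln_increasing; lra. }
      assert (0 < / eps) by (apply Rinv_0_lt_compat; lra).
      rewrite Rabs_left by (apply Rinv_neg; lra).
      rewrite <- Rinv_opp, <- (Rinv_inv eps).
      apply Rinv_lt_contravar; [apply Rmult_lt_0_compat|]; lra.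
  - apply (ex_derive_continuous (V := R_NormedModule)). unfold inv_ln.
    auto_derive. split; [lra|]. split; [apply ln_neq_0; lra | exact I].
Qed.

Lemma ex_RInt_inv_ln a b : 0 <= a <= b -> b < 1 \/ 1 < a -> ex_RInt inv_ln a b.
Proof.
  intros Hab Hb1. apply (ex_RInt_continuous (V := R_CompleteNormedModule)).
  intros z Hz. rewrite Rmin_left, Rmax_right in Hz by lra.
  apply inv_ln_continuous; lra.
Qed.

Lemma RInt_inv_ln_bounds a b : 1 < a <= b ->
  (b - a) * inv_ln b <= RInt inv_ln a b <= (b - a) * inv_ln a.
Proof.
  intros Hab. assert (Hint := ex_RInt_inv_ln a b ltac:(lra) ltac:(lra)).
  rewrite <- !(RInt_const (V := R_CompleteNormedModule)).
  split; apply RInt_le; try apply ex_RInt_const; try lra; try exact Hint;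
    intros t Ht; apply inv_ln_le; lra.
Qed.

Lemma is_RInt_reflect_pair (f : R -> R) (c a b : R) :
  ex_RInt f (c - a) (c - b) -> ex_RInt f (c + b) (c + a) ->
  is_RInt (fun s => f (c - s) + f (c + s)) b a
    (RInt f (c - a) (c - b) + RInt f (c + b) (c + a)).
Proof.
  intros Hl Hr.
  assert (Hleft : is_RInt (fun s => - f (c - s)) b a (RInt f (c - b) (c - a))).
  { apply (is_RInt_ext (fun s => scal (-1) (f (-1 * s + c)))).
    - intros s _. change (-1 * f (-1 * s + c) = - f (c - s)).
      replace (-1 * s + c) with (c - s) by ring. ring.
    - replace (c - b) with (-1 * b + c) by ring. replace (c - a) with (-1 * a + c) by ring.
      apply (is_RInt_comp_lin f (-1) c b a), (RInt_correct (V := R_CompleteNormedModule)).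
      replace (-1 * b + c) with (c - b) by ring. replace (-1 * a + c) with (c - a) by ring.
      apply ex_RInt_swap. exact Hl. }
  assert (Hright : is_RInt (fun s => f (c + s)) b a (RInt f (c + b) (c + a))).
  { apply (is_RInt_ext (fun s => scal 1 (f (1 * s + c)))).
    - intros s _. change (1 * f (1 * s + c) = f (c + s)).
      replace (1 * s + c) with (c + s) by ring. ring.
    - replace (c + b) with (1 * b + c) by ring. replace (c + a) with (1 * a + c) by ring.
      apply (is_RInt_comp_lin f 1 c b a), (RInt_correct (V := R_CompleteNormedModule)).
      replace (1 * b + c) with (c + b) by ring. replace (1 * a + c) with (c + a) by ring.
      exact Hr. }
  assert (Hswap : RInt f (c - a) (c - b) = - RInt f (c - b) (c - a)).
  { rewrite <- (opp_RInt_swap f (c - b) (c - a)) by (apply ex_RInt_swap; exact Hl).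
    reflexivity. }
  rewrite Hswap.
  apply (is_RInt_ext (fun s => minus (f (c + s)) (- f (c - s)))).
  - intros s _. change (f (c + s) - - f (c - s) = f (c - s) + f (c + s)). ring.
  - replace (- RInt f (c - b) (c - a) + RInt f (c + b) (c + a))
      with (minus (RInt f (c + b) (c + a)) (RInt f (c - b) (c - a)))
      by (rewrite (Rplus_comm (- _)); reflexivity).
    exact (is_RInt_minus (V := R_NormedModule) _ _ b a _ _ Hright Hleft).
Qed.

Lemma RInt_inv_ln_around_1_bounds a b : 0 < b <= a -> a <= 1 ->
  0 <= RInt inv_ln (1 - a) (1 - b) + RInt inv_ln (1 + b) (1 + a) <= 2 * (a - b).
Proof.
  intros Hab Ha.
  assert (Hpair : is_RInt (fun s => inv_ln (1 - s) + inv_ln (1 + s)) b a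
    (RInt inv_ln (1 - a) (1 - b) + RInt inv_ln (1 + b) (1 + a))).
  { apply is_RInt_reflect_pair; apply ex_RInt_inv_ln; lra. }
  rewrite <- (is_RInt_unique _ _ _ _ Hpair).
  assert (Hint := ex_intro _ _ Hpair).
  replace 0 with (RInt (fun _ => 0) b a) by (rewrite RInt_const; apply Rmult_0_r).
  replace (2 * (a - b)) with (RInt (fun _ => 2) b a) by (rewrite RInt_const; apply Rmult_comm).
  assert (Hbound : forall s, b < s < a -> 0 <= inv_ln (1 - s) + inv_ln (1 + s) <= 2).
  { intros s Hs.
    destruct (inv_ln_bounds (1 - s)) as [Hl1 Hl2]; [lra | lra |].
    destruct (inv_ln_bounds (1 + s)) as [Hr1 Hr2]; [lra | lra |].
    replace (1 - s - 1) with (- s) in * by ring. replace (1 + s - 1) with s in * by ring.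
    rewrite Rinv_opp in *. unfold inv_ln. lra. }
  split; apply RInt_le; try apply ex_RInt_const; try exact Hint; try lra;
    intros s Hs; apply Hbound in Hs; lra.
Qed.

Definition li_trunc (x eps : R) : R := RInt inv_ln 0 (1 - eps) + RInt inv_ln (1 + eps) x.

Lemma li_trunc_sub x a b : 0 < b <= a -> a <= 1 -> 1 + a <= x ->
  li_trunc x b - li_trunc x a = RInt inv_ln (1 - a) (1 - b) + RInt inv_ln (1 + b) (1 + a).
Proof.
  intros Hab Ha Hx. unfold li_trunc.
  rewrite <- (RInt_Chasles inv_ln 0 (1 - a) (1 - b)), <- (RInt_Chasles inv_ln (1 + b) (1 + a) x)
    by (apply ex_RInt_inv_ln; lra).
  change (plus ?u ?v) with (u + v). ring.
Qed.

Lemma li_trunc_Chasles x eps : 0 < eps <= 1 -> 2 <= x ->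
  li_trunc x eps = li_trunc 2 eps + RInt inv_ln 2 x.
Proof.
  intros Heps Hx. unfold li_trunc.
  rewrite <- (RInt_Chasles inv_ln (1 + eps) 2 x) by (apply ex_RInt_inv_ln; lra).
  change (plus ?u ?v) with (u + v). ring.
Qed.

Lemma ex_finite_lim_li_trunc x (eps : nat -> R) :
  (forall n, 0 < eps n <= 1) -> (forall n, eps (S n) <= eps n) -> 2 <= x ->
  ex_finite_lim_seq (fun n => li_trunc x (eps n)).
Proof.
  intros Heps Hdecr Hx.
  apply ex_finite_lim_seq_incr_telescoping with (w := fun n => 2 * eps n).
  - intros n. generalize (Heps n). lra.
  - intros n. generalize (Heps n) (Heps (S n)) (Hdecr n). intros.
    rewrite li_trunc_sub by lra.
    generalize (RInt_inv_ln_around_1_bounds (eps n) (eps (S n)) ltac:(lra) ltac:(lra)). lra.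
Qed.

(* Coquelicot's [Lim f 0] is the limit of [f (1 / (n + 1))]. *)
Lemma li_eq_add_RInt : exists c, forall x, 2 <= x -> li x = c + RInt inv_ln 2 x.
Proof.
  set (eps n := / (INR n + 1)).
  assert (Heps : forall n, 0 < eps n <= 1).
  { intros n. unfold eps. generalize (pos_INR n). intros.
    split; [apply Rinv_0_lt_compat; lra|]. rewrite <- Rinv_1. apply Rinv_le_contravar; lra. }
  assert (Hdecr : forall n, eps (S n) <= eps n).
  { intros n. unfold eps. rewrite S_INR. apply Rinv_le_contravar; generalize (pos_INR n); lra. }
  destruct (ex_finite_lim_li_trunc 2 eps Heps Hdecr (Rle_refl 2)) as [c Hc].
  exists c. intros x Hx. unfold li, Lim.
  rewrite (Lim_seq_ext _ (fun n => li_trunc 2 (eps n) + RInt inv_ln 2 x)).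
  - rewrite (is_lim_seq_unique _ (c + RInt inv_ln 2 x)); [reflexivity|].
    apply is_lim_seq_plus'; [exact Hc | apply is_lim_seq_const].
  - intros n. simpl Rbar_loc_seq. rewrite Rplus_0_l, Rabs_pos_eq by (left; apply Heps).
    exact (li_trunc_Chasles x (eps n) (Heps n) Hx).
Qed.

Lemma li_add_1 x : 2 <= x -> li (x + 1) - li x = RInt inv_ln x (x + 1).
Proof.
  intros Hx. destruct li_eq_add_RInt as [c Hli].
  rewrite !Hli by lra.
  rewrite <- (RInt_Chasles inv_ln 2 x (x + 1)) by (apply ex_RInt_inv_ln; lra).
  change (plus ?u ?v) with (u + v). ring.
Qed.

Definition li_sub_harmonic_sum (n : nat) : R :=
  li (INR n) - sum_n_m (fun k => / (harmonic k - euler_gamma)) 1 n.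

Lemma li_sub_harmonic_sum_succ n : (2 <= n)%nat ->
  0 <= li_sub_harmonic_sum (S n) - li_sub_harmonic_sum n
    <= inv_ln (INR n) - inv_ln (INR n + 2).
Proof.
  intros Hn. assert (Hn2 : 2 <= INR n) by (apply (le_INR 2); exact Hn).
  unfold li_sub_harmonic_sum. rewrite sum_n_Sm by lia.
  change (plus ?u ?v) with (u + v).
  generalize (li_add_1 (INR n) Hn2) (RInt_inv_ln_bounds (INR n) (INR n + 1) ltac:(lra))
    (inv_harmonic_sub_euler_gamma_bounds (S n) ltac:(lia)).
  rewrite S_INR. replace (INR n + 1 + 1) with (INR n + 2) by ring.
  replace (INR n + 1 - INR n) with 1 by ring. lra.
Qed.

Theorem lemma7p12 :
  exists l : R,
    is_lim_seq
      (fun n : nat => li (INR n) - sum_n_m (fun k => / (harmonic k - euler_gamma)) 1 n)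
      l.
Proof.
  destruct (ex_finite_lim_seq_incr_telescoping (fun n => li_sub_harmonic_sum (n + 2))
    (fun n => inv_ln (INR (n + 2)) + inv_ln (INR (n + 2) + 1))) as [l Hl].
  - intros n. assert (2 <= INR (n + 2)) by (apply (le_INR 2); lia).
    generalize (inv_ln_gt_0 (INR (n + 2)) ltac:(lra))
      (inv_ln_gt_0 (INR (n + 2) + 1) ltac:(lra)). lra.
  - intros n. change (S n + 2)%nat with (S (n + 2)). rewrite S_INR.
    replace (INR (n + 2) + 1 + 1) with (INR (n + 2) + 2) by ring.
    generalize (li_sub_harmonic_sum_succ (n + 2) ltac:(lia)). lra.
  - exists l. apply (is_lim_seq_incr_n _ 2). exact Hl.
Qed.
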